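(* Let $\mathfrak p$ be a probability distribution supported by $\mathbb N$ and let $B\subseteq\mathbb N^{\mathbb N}$ be the set of bounded sequences. Then $\dim_H\pi_{\mathfrak p}(B)=1$.
   Context: $\mathbb N=\{1,2,3,\dots\}$. A probability distribution $\mathfrak p=(p_i)_{i\in\mathbb N}$ is supported by $\mathbb N$ if $p_i\in(0,1)$ for all $i$ and $\sum_{i=1}^\infty p_i=1$. Set $\widehat{p_1}=0$ and $\widehat{p_n}=\sum_{i=1}^{n-1}p_i$ for $n\ge 2$. For $n\in\mathbb N$ let $T_n x=p_n x+\widehat{p_n}$. Define $\pi_{\mathfrak p}:\mathbb N^{\mathbb N}\to[0,1)$ by $\pi_{\mathfrak p}((n_j))=\lim_{j\to\infty}T_{n_1}\circ\cdots\circ T_{n_j}(0)=\widehat{p_{n_1}}+\sum_{j=1}^\infty p_{n_1}\cdots p_{n_j}\widehat{p_{n_{j+1}}}$. $\dim_H$ denotes Hausdorff dimension. *)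

From Stdlib Require Import Reals.
Open Scope R_scope.

(* A probability distribution p supported by N = {1,2,...}; p 0 is unused. *)
Definition supported_by_N (p : nat -> R) : Prop :=
  (forall i, (1 <= i)%nat -> 0 < p i < 1) /\
  infinite_sum (fun k => p (S k)) 1.

Fixpoint phat (p : nat -> R) (n : nat) : R :=
  match n with
  | O => 0
  | S O => 0
  | S m => phat p m + p m
  end.

Definition T (p : nat -> R) (n : nat) (x : R) : R := p n * x + phat p n.

(* Tcomp p w j x = T_{w 0} (T_{w 1} ( ... T_{w (j-1)} x)).
   The sequence (n_1, n_2, ...) is w 0, w 1, ... *)
Fixpoint Tcomp_from (p : nat -> R) (w : nat -> nat) (k j : nat) (x : R) : R :=
  match j with
  | O => x
  | S j' => T p (w k) (Tcomp_from p w (S k) j' x)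
  end.

Definition Tcomp (p : nat -> R) (w : nat -> nat) (j : nat) (x : R) : R :=
  Tcomp_from p w O j x.

Definition in_NN (w : nat -> nat) : Prop := forall j, (1 <= w j)%nat.

Definition pi_is (p : nat -> R) (w : nat -> nat) (y : R) : Prop :=
  Un_cv (fun j => Tcomp p w j 0) y.

Definition bounded_seq (w : nat -> nat) : Prop :=
  in_NN w /\ exists M : nat, forall j, (w j <= M)%nat.

Definition pi_image_bounded (p : nat -> R) (y : R) : Prop :=
  exists w, bounded_seq w /\ pi_is p w y.

Definition hausdorff_null (s : R) (E : R -> Prop) : Prop :=
  forall delta eps : R, 0 < delta -> 0 < eps ->
  exists (U : nat -> R -> Prop) (d : nat -> R) (l : R),
    (forall x, E x -> exists i, U i x) /\
    (forall i, 0 < d i <= delta) /\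
    (forall i x y, U i x -> U i y -> Rabs (x - y) <= d i) /\
    infinite_sum (fun i => Rpower (d i) s) l /\ l < eps.

Definition is_glb (A : R -> Prop) (m : R) : Prop :=
  (forall x, A x -> m <= x) /\ (forall b, (forall x, A x -> b <= x) -> b <= m).

Definition hausdorff_dim_is (E : R -> Prop) (dim : R) : Prop :=
  is_glb (fun s => 0 <= s /\ hausdorff_null s E) dim.

(* pi_p(B) lies in [0, 1), which is H^s-null for every s > 1.  For s < 1 the weights p_i^s
   have total mass above 1 on some {1, ..., M}; renormalised there they form a distribution q
   with q_i <= p_i^s.  On sequences with digits in {1, ..., M} the map pi_p(w) |-> pi_q(w)
   is then s-Hölder, since the cylinder of a digit shrinks by p_i on one side and by
   q_i <= p_i^s on the other, and pi_q maps these sequences onto [0, 1) by greedy expansion.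
   A cover of pi_p(B) with small sum d_i^s would thus yield a cover of [0, 1/2] of small
   total length. *)

From Stdlib Require Import Reals Lra Lia Classical ClassicalEpsilon FunctionalExtensionality List.
Open Scope R_scope.

Lemma phat_S (f : nat -> R) m : (1 <= m)%nat -> phat f (S m) = phat f m + f m.
Proof. intros H. destruct m as [|m]; [lia|reflexivity]. Qed.

Lemma phat_le (f : nat -> R) i j : (1 <= i <= j)%nat ->
  (forall k, (i <= k < j)%nat -> 0 <= f k) -> phat f i <= phat f j.
Proof.
  intros Hij Hf. induction j as [|j IH]; [lia|].
  destruct (Nat.eq_dec i (S j)) as [->|Hne]; [lra|].
  rewrite phat_S by lia.
  assert (phat f i <= phat f j) by (apply IH; [lia|intros k Hk; apply Hf; lia]).
  assert (0 <= f j) by (apply Hf; lia). lra.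
Qed.

Lemma phat_nonneg (f : nat -> R) j : (forall k, (1 <= k < j)%nat -> 0 <= f k) -> 0 <= phat f j.
Proof.
  intros Hf. destruct j as [|j]; [simpl; lra|].
  change 0 with (phat f 1). apply phat_le; [lia|]. intros k Hk; apply Hf; lia.
Qed.

Lemma phat_sum (f : nat -> R) n : sum_f_R0 (fun k => f (S k)) n = phat f (S (S n)).
Proof.
  induction n as [|n IH]; [simpl; ring|].
  simpl sum_f_R0. rewrite IH, (phat_S f (S (S n))) by lia. reflexivity.
Qed.

Lemma phat_div (f : nat -> R) c k : phat (fun i => f i / c) k = phat f k / c.
Proof.
  induction k as [|k IH]; [simpl; unfold Rdiv; ring|].
  destruct k as [|k]; [simpl; unfold Rdiv; ring|].
  rewrite !(phat_S _ (S k)), IH by lia. unfold Rdiv. ring.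
Qed.

Definition shift (w : nat -> nat) : nat -> nat := fun l => w (S l).
Definition shiftn (k : nat) (w : nat -> nat) : nat -> nat := fun l => w (k + l)%nat.

Lemma Tcomp_from_shiftn r w k m j t :
  Tcomp_from r w (k + m) j t = Tcomp_from r (shiftn k w) m j t.
Proof.
  revert m. induction j as [|j IH]; intros m; simpl; [reflexivity|].
  rewrite <- IH, <- Nat.add_succ_r. reflexivity.
Qed.

Lemma Tcomp_S r w j t : Tcomp r w (S j) t = T r (w O) (Tcomp r (shift w) j t).
Proof. unfold Tcomp. simpl. f_equal. exact (Tcomp_from_shiftn r w 1 0 j t). Qed.

Lemma Tcomp_add r w j m t : Tcomp r w (j + m) t = Tcomp r w j (Tcomp r (shiftn j w) m t).
Proof.
  revert w. induction j as [|j IH]; intros w; [reflexivity|].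
  simpl plus. rewrite !Tcomp_S, IH. reflexivity.
Qed.

Fixpoint cylinder_length (r : nat -> R) (w : nat -> nat) (j : nat) : R :=
  match j with O => 1 | S j' => r (w O) * cylinder_length r (shift w) j' end.

Lemma Tcomp_affine r w j t : Tcomp r w j t = Tcomp r w j 0 + cylinder_length r w j * t.
Proof.
  revert w. induction j as [|j IH]; intros w; [unfold Tcomp; simpl; ring|].
  rewrite !Tcomp_S, IH. unfold T. simpl. ring.
Qed.

Lemma Tcomp_telescope r w (u : nat -> R) :
  (forall k, T r (w k) (u (S k)) = u k) -> forall j, Tcomp r w j (u j) = u O.
Proof.
  intros H j. revert w u H. induction j as [|j IH]; intros w u H; [reflexivity|].
  rewrite Tcomp_S, (IH (shift w) (fun k => u (S k))); [apply H|intros k; apply H].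
Qed.

Lemma cv_const c : Un_cv (fun _ => c) c.
Proof. intros eps He. exists O. intros n _. unfold Rdist. rewrite Rminus_diag, Rabs_R0. lra. Qed.
Definition pi_lim (r : nat -> R) (w : nat -> nat) : R :=
  epsilon (inhabits 0) (pi_is r w).

Section FiniteAlphabet.
Variable r : nat -> R.
Variable M : nat.
Hypothesis hr : forall i, (1 <= i <= M)%nat -> 0 < r i < 1.
Hypothesis hP : phat r (S M) <= 1.

Definition digits_le (w : nat -> nat) := forall j, (1 <= w j <= M)%nat.

Lemma digits_le_shift w : digits_le w -> digits_le (shift w).
Proof. intros H j. apply H. Qed.

Lemma digits_le_shiftn k w : digits_le w -> digits_le (shiftn k w).
Proof. intros H j. apply H. Qed.

Lemma phat_bounds i : (1 <= i <= S M)%nat -> 0 <= phat r i <= phat r (S M).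
Proof.
  intros Hi. split.
  - apply phat_nonneg. intros k Hk. left; apply hr; lia.
  - apply phat_le; [lia|]. intros k Hk. left; apply hr; lia.
Qed.

Lemma T_bounds i t : (1 <= i <= M)%nat -> 0 <= t <= 1 ->
  phat r i <= T r i t <= phat r (S i).
Proof. intros Hi Ht. unfold T. rewrite phat_S by lia. pose proof (hr i Hi). split; nra. Qed.

Lemma Tcomp_bounds w j t : digits_le w -> 0 <= t <= phat r (S M) ->
  0 <= Tcomp r w j t <= phat r (S M).
Proof.
  revert w. induction j as [|j IH]; intros w Hw Ht; [exact Ht|].
  rewrite Tcomp_S.
  pose proof (IH (shift w) (digits_le_shift w Hw) Ht).
  pose proof (T_bounds (w O) (Tcomp r (shift w) j t) (Hw O) ltac:(lra)).
  pose proof (phat_bounds (w O) ltac:(specialize (Hw O); lia)).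
  pose proof (phat_bounds (S (w O)) ltac:(specialize (Hw O); lia)). lra.
Qed.

Lemma cylinder_length_pos w j : digits_le w -> 0 < cylinder_length r w j.
Proof.
  revert w. induction j as [|j IH]; intros w Hw; simpl; [lra|].
  apply Rmult_lt_0_compat; [apply hr, Hw|apply IH, digits_le_shift, Hw].
Qed.

Lemma cylinder_length_le_pow w j rho : digits_le w ->
  (forall i, (1 <= i <= M)%nat -> r i <= rho) -> cylinder_length r w j <= rho ^ j.
Proof.
  intros Hw Hrho. revert w Hw. induction j as [|j IH]; intros w Hw; simpl; [lra|].
  apply Rmult_le_compat;
    [left; apply hr, Hw|left; apply cylinder_length_pos, digits_le_shift, Hw
    |apply Hrho, Hw|apply IH, digits_le_shift, Hw].
Qed.

Lemma Tcomp_growing w : digits_le w -> Un_growing (fun j => Tcomp r w j 0).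
Proof.
  intros Hw j. simpl. rewrite <- Nat.add_1_r, Tcomp_add.
  rewrite (Tcomp_affine r w j (Tcomp r (shiftn j w) 1 0)).
  pose proof (cylinder_length_pos w j Hw).
  pose proof (phat_bounds (S M) ltac:(lia)).
  pose proof (Tcomp_bounds (shiftn j w) 1 0 (digits_le_shiftn j w Hw) ltac:(lra)). nra.
Qed.

Lemma pi_lim_spec w : digits_le w -> pi_is r w (pi_lim r w).
Proof.
  intros Hw. unfold pi_lim. apply epsilon_spec.
  destruct (growing_cv (fun j => Tcomp r w j 0)) as [l Hl].
  - apply Tcomp_growing, Hw.
  - exists (phat r (S M)). intros y [i ->].
    pose proof (phat_bounds (S M) ltac:(lia)).
    apply (Tcomp_bounds w i 0 Hw). lra.
  - exists l; exact Hl.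
Qed.

Lemma pi_lim_bounds w : digits_le w -> 0 <= pi_lim r w <= phat r (S M).
Proof.
  intros Hw. pose proof (phat_bounds (S M) ltac:(lia)).
  assert (Hb : forall n, 0 <= Tcomp r w n 0 <= phat r (S M))
    by (intros n; apply Tcomp_bounds; [exact Hw|lra]).
  split.
  - apply (@Rle_cv_lim (fun _ => 0) (fun n => Tcomp r w n 0) 0);
      [apply Hb|apply cv_const|apply pi_lim_spec, Hw].
  - apply (@Rle_cv_lim (fun n => Tcomp r w n 0) (fun _ => phat r (S M)) _ (phat r (S M)));
      [apply Hb|apply pi_lim_spec, Hw|apply cv_const].
Qed.

Lemma pi_lim_shift w : digits_le w -> pi_lim r w = T r (w O) (pi_lim r (shift w)).
Proof.
  intros Hw. apply (UL_sequence (fun n => Tcomp r w (S n) 0)).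
  - intros eps He. destruct (pi_lim_spec w Hw eps He) as [N HN].
    exists N. intros n Hn. apply HN. lia.
  - apply (Un_cv_ext (fun n => r (w O) * Tcomp r (shift w) n 0 + phat r (w O))).
    + intros n. rewrite Tcomp_S. reflexivity.
    + apply CV_plus; [apply CV_mult|]; try apply cv_const.
      apply pi_lim_spec, digits_le_shift, Hw.
Qed.

End FiniteAlphabet.

Lemma Rpower_pos x y : 0 < Rpower x y.
Proof. apply exp_pos. Qed.

Section HolderComparison.
Variables p q : nat -> R.
Variable M : nat.
Hypothesis hp : forall i, (1 <= i <= M)%nat -> 0 < p i < 1.
Hypothesis hq : forall i, (1 <= i <= M)%nat -> 0 < q i < 1.
Hypothesis hPp : phat p (S M) < 1.
Hypothesis hPq : phat q (S M) <= 1.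
Variable s : R.
Hypothesis hs : 0 <= s.
Hypothesis hqp : forall i, (1 <= i <= M)%nat -> q i <= Rpower (p i) s.
Variable pmin : R.
Hypothesis hpmin : 0 < pmin.
Hypothesis hpmin_le : forall i, (1 <= i <= M)%nat -> pmin <= p i.

Definition gap := pmin * (1 - phat p (S M)).

Lemma gap_pos : 0 < gap.
Proof. unfold gap. apply Rmult_lt_0_compat; lra. Qed.

Lemma gap_le_first_digit_lt x y : digits_le M x -> digits_le M y -> (x O < y O)%nat ->
  gap <= pi_lim p y - pi_lim p x.
Proof.
  intros Hx Hy Hlt.
  rewrite (pi_lim_shift p M hp ltac:(lra) x Hx), (pi_lim_shift p M hp ltac:(lra) y Hy).
  pose proof (pi_lim_bounds p M hp ltac:(lra) (shift x) (digits_le_shift M x Hx)).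
  pose proof (pi_lim_bounds p M hp ltac:(lra) (shift y) (digits_le_shift M y Hy)).
  pose proof (T_bounds p M hp (y O) (pi_lim p (shift y)) (Hy O) ltac:(lra)).
  assert (Hle : phat p (S (x O)) <= phat p (y O)).
  { apply phat_le; [lia|]. intros k Hk. left; apply hp. specialize (Hy O). lia. }
  rewrite phat_S in Hle by (specialize (Hx O); lia).
  pose proof (hpmin_le (x O) (Hx O)). pose proof (hp (x O) (Hx O)).
  unfold T at 2. unfold gap. nra.
Qed.

Definition holder_const := Rpower gap (- s).

Lemma holder_const_pos : 0 < holder_const.
Proof. apply Rpower_pos. Qed.

Lemma holder_first_digit_lt x y : digits_le M x -> digits_le M y -> (x O < y O)%nat ->
  0 < Rabs (pi_lim p x - pi_lim p y) /\
  Rabs (pi_lim q x - pi_lim q y) <= holder_const * Rpower (Rabs (pi_lim p x - pi_lim p y)) s.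
Proof.
  intros Hx Hy Hlt.
  pose proof (gap_le_first_digit_lt x y Hx Hy Hlt). pose proof gap_pos.
  rewrite Rabs_minus_sym, Rabs_right by lra. split; [lra|].
  assert (Hone : holder_const * Rpower gap s = 1).
  { unfold holder_const. rewrite <- Rpower_plus, Rplus_opp_l. apply Rpower_O, gap_pos. }
  apply (Rle_trans _ 1).
  - pose proof (pi_lim_bounds q M hq hPq x Hx). pose proof (pi_lim_bounds q M hq hPq y Hy).
    apply Rabs_le. lra.
  - rewrite <- Hone. apply Rmult_le_compat_l; [left; apply holder_const_pos|].
    apply Rle_Rpower_l; lra.
Qed.

(* Induction on the position of a differing digit: a common first digit [a] scales the
   p-distance by [p a] and the q-distance by [q a <= p a ^ s]. *)
Lemma holder_digit_neq n : forall x y, digits_le M x -> digits_le M y -> x n <> y n ->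
  0 < Rabs (pi_lim p x - pi_lim p y) /\
  Rabs (pi_lim q x - pi_lim q y) <= holder_const * Rpower (Rabs (pi_lim p x - pi_lim p y)) s.
Proof.
  induction n as [|n IH]; intros x y Hx Hy Hn.
  all: destruct (Nat.lt_total (x O) (y O)) as [Hlt|[H0|Hlt]];
    [apply holder_first_digit_lt; auto| |
     rewrite (Rabs_minus_sym (pi_lim p x)), (Rabs_minus_sym (pi_lim q x));
     apply holder_first_digit_lt; auto].
  - contradiction.
  - destruct (IH (shift x) (shift y) (digits_le_shift M x Hx) (digits_le_shift M y Hy) Hn)
      as [Hpos Hbound].
    rewrite (pi_lim_shift p M hp ltac:(lra) x Hx), (pi_lim_shift p M hp ltac:(lra) y Hy),
      (pi_lim_shift q M hq hPq x Hx), (pi_lim_shift q M hq hPq y Hy), <- H0.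
    set (a := x O). pose proof (hp a (Hx O)). pose proof (hq a (Hx O)). pose proof (hqp a (Hx O)).
    set (dp := pi_lim p (shift x) - pi_lim p (shift y)) in *.
    set (dq := pi_lim q (shift x) - pi_lim q (shift y)) in *.
    unfold T.
    replace (p a * pi_lim p (shift x) + phat p a - (p a * pi_lim p (shift y) + phat p a))
      with (p a * dp) by (unfold dp; ring).
    replace (q a * pi_lim q (shift x) + phat q a - (q a * pi_lim q (shift y) + phat q a))
      with (q a * dq) by (unfold dq; ring).
    rewrite !Rabs_mult, (Rabs_right (p a)), (Rabs_right (q a)) by lra.
    split; [apply Rmult_lt_0_compat; lra|].
    rewrite <- Rpower_mult_distr by lra.
    pose proof holder_const_pos. pose proof (Rpower_pos (Rabs dp) s).
    apply (Rle_trans _ (q a * (holder_const * Rpower (Rabs dp) s))).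
    + apply Rmult_le_compat_l; lra.
    + replace (holder_const * (Rpower (p a) s * Rpower (Rabs dp) s))
        with (Rpower (p a) s * (holder_const * Rpower (Rabs dp) s)) by ring.
      apply Rmult_le_compat_r; [left; apply Rmult_lt_0_compat|]; lra.
Qed.

Lemma pi_lim_holder x y : digits_le M x -> digits_le M y ->
  x = y \/
  (pi_lim p x <> pi_lim p y /\
   Rabs (pi_lim q x - pi_lim q y) <= holder_const * Rpower (Rabs (pi_lim p x - pi_lim p y)) s).
Proof.
  intros Hx Hy. destruct (classic (exists n, x n <> y n)) as [[n Hn]|Hnone].
  - right. destruct (holder_digit_neq n x y Hx Hy Hn) as [Hpos Hb]. split; [|exact Hb].
    intros E. rewrite E, Rminus_diag, Rabs_R0 in Hpos. lra.
  - left. apply functional_extensionality. intros n. apply NNPP. intros Hn. eauto.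
Qed.

End HolderComparison.

Lemma finite_max_lt_1 (f : nat -> R) n : (forall i, (1 <= i <= n)%nat -> f i < 1) ->
  exists rho, rho < 1 /\ forall i, (1 <= i <= n)%nat -> f i <= rho.
Proof.
  induction n as [|n IH]; intros H.
  - exists 0. split; [lra|lia].
  - destruct IH as [rho [H1 H2]]; [intros i Hi; apply H; lia|].
    exists (Rmax rho (f (S n))). split; [apply Rmax_lub_lt; [lra|apply H; lia]|].
    intros i Hi. destruct (Nat.eq_dec i (S n)) as [->|Hne]; [apply Rmax_r|].
    eapply Rle_trans; [apply H2; lia|apply Rmax_l].
Qed.

Lemma finite_min_pos (f : nat -> R) n : (forall i, (1 <= i <= n)%nat -> 0 < f i) ->
  exists m, 0 < m /\ forall i, (1 <= i <= n)%nat -> m <= f i.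
Proof.
  induction n as [|n IH]; intros H.
  - exists 1. split; [lra|lia].
  - destruct IH as [m [H1 H2]]; [intros i Hi; apply H; lia|].
    exists (Rmin m (f (S n))). split; [apply Rmin_glb_lt; [lra|apply H; lia]|].
    intros i Hi. destruct (Nat.eq_dec i (S n)) as [->|Hne]; [apply Rmin_r|].
    eapply Rle_trans; [apply Rmin_l|apply H2; lia].
Qed.

Lemma phat_interval_ex (f : nat -> R) n t : 0 <= t < phat f (S n) ->
  exists i, (1 <= i <= n)%nat /\ phat f i <= t < phat f (S i).
Proof.
  induction n as [|n IH]; intros Ht; [simpl in Ht; lra|].
  destruct (Rlt_le_dec t (phat f (S n))) as [H|H].
  - destruct (IH ltac:(lra)) as [i [Hi Hti]]. exists i. split; [lia|exact Hti].
  - exists (S n). split; [lia|lra].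
Qed.

Section GreedyExpansion.
Variable q : nat -> R.
Variable M : nat.
Hypothesis hq : forall i, (1 <= i <= M)%nat -> 0 < q i < 1.
Hypothesis hPq : phat q (S M) = 1.

Definition digit (t : R) : nat :=
  epsilon (inhabits O) (fun i => (1 <= i <= M)%nat /\ phat q i <= t < phat q (S i)).

Lemma digit_spec t : 0 <= t < 1 ->
  (1 <= digit t <= M)%nat /\ phat q (digit t) <= t < phat q (S (digit t)).
Proof. intros Ht. unfold digit. apply epsilon_spec, phat_interval_ex. lra. Qed.

(* [remainder t k] is the point sent to [t] by the maps of the first [k] greedy digits. *)
Fixpoint remainder (t : R) (k : nat) : R :=
  match k with
  | O => t
  | S k' => (remainder t k' - phat q (digit (remainder t k'))) / q (digit (remainder t k'))
  end.

Lemma remainder_range t k : 0 <= t < 1 -> 0 <= remainder t k < 1.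
Proof.
  intros Ht. induction k as [|k IH]; simpl; [exact Ht|].
  destruct (digit_spec _ IH) as [Hd [Hlo Hhi]].
  set (u := remainder t k) in *. set (d := digit u) in *.
  rewrite phat_S in Hhi by lia. pose proof (hq d Hd).
  split.
  - apply Rmult_le_pos; [lra|]. left; apply Rinv_0_lt_compat; lra.
  - apply (Rmult_lt_reg_r (q d)); [lra|].
    unfold Rdiv. rewrite Rmult_assoc, Rinv_l by lra. lra.
Qed.

Definition greedy_digits (t : R) : nat -> nat := fun k => digit (remainder t k).

Lemma greedy_digits_le t : 0 <= t < 1 -> digits_le M (greedy_digits t).
Proof. intros Ht k. apply (digit_spec _ (remainder_range t k Ht)). Qed.

Lemma pi_lim_greedy_digits t : 0 <= t < 1 -> pi_lim q (greedy_digits t) = t.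
Proof.
  intros Ht. set (w := greedy_digits t). assert (Hw : digits_le M w) by apply greedy_digits_le, Ht.
  destruct (finite_max_lt_1 q M (fun i Hi => proj2 (hq i Hi))) as [rho [Hrho Hqrho]].
  assert (Hrho0 : 0 <= rho) by (pose proof (Hqrho _ (Hw O)); pose proof (hq _ (Hw O)); lra).
  assert (HT : forall k, T q (w k) (remainder t (S k)) = remainder t k).
  { intros k. unfold w, greedy_digits, T. simpl.
    destruct (digit_spec _ (remainder_range t k Ht)) as [Hd _]. pose proof (hq _ Hd).
    field. lra. }
  apply (UL_sequence (fun j => Tcomp q w j 0)); [apply (pi_lim_spec q M hq ltac:(lra) w Hw)|].
  intros eps He.
  destruct (pow_lt_1_zero rho ltac:(rewrite Rabs_right; lra) eps He) as [N HN].
  exists N. intros n Hn. specialize (HN n Hn).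
  rewrite Rabs_right in HN by (apply Rle_ge, pow_le; lra).
  pose proof (Tcomp_telescope q w (remainder t) HT n) as E. simpl in E.
  rewrite Tcomp_affine in E.
  pose proof (cylinder_length_pos q M hq w n Hw).
  pose proof (cylinder_length_le_pow q M hq w n rho Hw Hqrho).
  pose proof (remainder_range t n Ht).
  unfold Rdist. rewrite Rabs_left1 by nra. nra.
Qed.

End GreedyExpansion.

(* An interval [(a, l)] stands for [[a, a + l]]. *)
Definition total_length (l : list (R * R)) : R := fold_right (fun iv acc => snd iv + acc) 0 l.

Lemma total_length_app l1 l2 : total_length (l1 ++ l2) = total_length l1 + total_length l2.
Proof. induction l1 as [|iv l1 IH]; simpl; [ring|]. rewrite IH. ring. Qed.

Lemma total_length_nonneg l : (forall iv, In iv l -> 0 <= snd iv) -> 0 <= total_length l.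
Proof.
  induction l as [|iv l IH]; intros H; simpl; [lra|].
  pose proof (H iv (or_introl eq_refl)).
  assert (0 <= total_length l) by (apply IH; intros; apply H; right; auto). lra.
Qed.

Lemma total_length_map_seq (g : nat -> R * R) m :
  total_length (map g (seq 0 (S m))) = sum_f_R0 (fun i => snd (g i)) m.
Proof.
  induction m as [|m IH]; [simpl; ring|].
  rewrite seq_S, map_app, total_length_app, IH. simpl. ring.
Qed.

(* The interval containing [b] is removed and [b] is lowered to just below its left end;
   the slack [eps] avoids needing the removed interval to be closed on the left. *)
Lemma interval_le_total_length n : forall (l : list (R * R)), length l = n ->
  forall a b, a <= b ->
  (forall x, a <= x <= b -> exists iv, In iv l /\ fst iv <= x <= fst iv + snd iv) ->
  (forall iv, In iv l -> 0 <= snd iv) -> b - a <= total_length l.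
Proof.
  induction n as [|n IH]; intros l Hlen a b Hab Hcov Hpos.
  - destruct l; [|discriminate]. destruct (Hcov b ltac:(lra)) as [iv [[] _]].
  - destruct (Hcov b ltac:(lra)) as [[al c] [Hin [Hb1 Hb2]]]. simpl in Hb1, Hb2.
    destruct (in_split _ _ Hin) as [l1 [l2 ->]].
    rewrite !total_length_app in *. simpl.
    assert (Hpos' : forall iv, In iv (l1 ++ l2) -> 0 <= snd iv).
    { intros iv Hiv. apply Hpos. apply in_app_iff in Hiv. apply in_app_iff. simpl. tauto. }
    assert (Hrest : al - a <= total_length (l1 ++ l2)).
    { destruct (Rle_lt_dec al a) as [Ha|Ha]; [pose proof (total_length_nonneg _ Hpos'); lra|].
      apply Rle_plus_epsilon. intros eps He.
      set (b' := Rmax a (al - eps)).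
      assert (a <= b' /\ b' < al /\ al - eps <= b')
        by (unfold b'; repeat split; [apply Rmax_l|apply Rmax_lub_lt; lra|apply Rmax_r]).
      assert (b' - a <= total_length (l1 ++ l2)); [|lra].
      apply (IH (l1 ++ l2)); [rewrite length_app in *; simpl in Hlen; lia|lra| |exact Hpos'].
      intros x Hx. destruct (Hcov x ltac:(lra)) as [iv [Hiv Hxiv]].
      exists iv. split; [|exact Hxiv].
      apply in_app_iff in Hiv. destruct Hiv as [Hiv|[<-|Hiv]]; apply in_app_iff; auto.
      simpl in Hxiv. lra. }
    rewrite total_length_app in Hrest. lra.
Qed.

Lemma list_lt_INR (l : list R) : exists N, forall x, In x l -> x < INR N.
Proof.
  induction l as [|a l [N HN]]; [exists O; intros x []|].
  destruct (INR_archimed 1 a ltac:(lra)) as [n Hn].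
  exists (Nat.max n N). intros x [<-|Hx].
  - pose proof (le_INR n (Nat.max n N) ltac:(lia)). lra.
  - pose proof (HN x Hx). pose proof (le_INR N (Nat.max n N) ltac:(lia)). lra.
Qed.

(* Heine-Borel for a sequence of open sets, via [compact_P3] on the family indexed by [INR n]. *)
Lemma interval_finite_subcover (a b : R) (V : nat -> R -> Prop) :
  (forall n x, V n x -> exists e, 0 < e /\ forall z, Rabs (z - x) < e -> V n z) ->
  (forall t, a <= t <= b -> exists n, V n t) ->
  exists N, forall t, a <= t <= b -> exists n, (n < N)%nat /\ V n t.
Proof.
  intros Hopen Hcov.
  assert (Hind : forall x, (exists y, exists n, x = INR n /\ V n y) -> exists n, x = INR n)
    by (intros x [y [n [Hn _]]]; eauto).
  set (F := mkfamily (fun x => exists n, x = INR n) (fun x y => exists n, x = INR n /\ V n y) Hind).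
  destruct (compact_P3 a b F) as [D [HcovD [l Hl]]].
  - split.
    + intros t Ht. destruct (Hcov t Ht) as [n Hn]. exists (INR n). simpl. eauto.
    + intros x y [n [-> Hy]]. destruct (Hopen n y Hy) as [e [He Hball]].
      exists (mkposreal e He). intros z Hz. exists n. split; [reflexivity|apply Hball, Hz].
  - destruct (list_lt_INR l) as [N HN]. exists N. intros t Ht.
    destruct (HcovD t Ht) as [y [[n [-> Hn]] HD]]. exists n. split; [|exact Hn].
    apply INR_lt, HN, Hl. split; [exists n; reflexivity|exact HD].
Qed.

Lemma infinite_sum_scal f l k : infinite_sum f l -> infinite_sum (fun n => k * f n) (k * l).
Proof.
  intros H. apply (Un_cv_ext (fun n => k * sum_f_R0 f n)).
  - intros n. rewrite scal_sum. apply sum_eq. intros. ring.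
  - apply (CV_mult (fun _ => k)); [apply cv_const|exact H].
Qed.

Lemma infinite_sum_geometric c x : Rabs x < 1 ->
  infinite_sum (fun i => c * x ^ i) (c / (1 - x)).
Proof.
  intros Hx. apply (Un_cv_ext (fun n => sum_f_R0 (fun i => c * (1 * x ^ i)) n)).
  - intros n. apply sum_eq. intros. ring.
  - apply infinite_sum_scal, GP_infinite, Hx.
Qed.

Lemma interval_le_sum_diameters (a b : R) (c rad : nat -> R) m :
  a <= b -> (forall n, 0 <= rad n) ->
  (forall x, a <= x <= b -> exists n, (n <= m)%nat /\ Rabs (x - c n) <= rad n) ->
  b - a <= sum_f_R0 (fun n => 2 * rad n) m.
Proof.
  intros Hab Hrad Hcov.
  set (g := fun n => (c n - rad n, 2 * rad n)).
  replace (sum_f_R0 (fun n => 2 * rad n) m) with (total_length (map g (seq 0 (S m))))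
    by apply total_length_map_seq.
  apply (interval_le_total_length (length (map g (seq 0 (S m))))); [reflexivity|exact Hab| |].
  - intros x Hx. destruct (Hcov x Hx) as [n [Hn Hxn]].
    exists (g n). split; [apply in_map, in_seq; lia|].
    unfold g. simpl. unfold Rabs in Hxn. destruct (Rcase_abs (x - c n)); lra.
  - intros iv Hiv. apply in_map_iff in Hiv. destruct Hiv as [n [<- _]].
    unfold g. simpl. pose proof (Hrad n). lra.
Qed.

(* Each set is enlarged to an open interval of radius [e i + eta 2^-i] and compactness
   leaves finitely many of them. *)
Lemma interval_le_cover_diameters (W : nat -> R -> Prop) (e : nat -> R) (Sg a b : R) :
  a <= b -> (forall i, 0 <= e i) ->
  (forall i x y, W i x -> W i y -> Rabs (x - y) <= e i) ->
  infinite_sum e Sg ->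
  (forall t, a <= t <= b -> exists i, W i t) ->
  b - a <= 2 * Sg.
Proof.
  intros Hab He Hdiam HS Hcov.
  apply Rle_plus_epsilon. intros eps Heps.
  set (eta := eps / 4).
  set (et := fun i => eta * (/2) ^ i).
  assert (Het : forall i, 0 < et i)
    by (intros i; apply Rmult_lt_0_compat; [unfold eta; lra|apply pow_lt; lra]).
  set (c := fun i => epsilon (inhabits 0) (W i)).
  set (V := fun i x => (exists w, W i w) /\ Rabs (x - c i) < e i + et i).
  destruct (interval_finite_subcover a b V) as [N HN].
  - intros n x [Hne Hx]. exists (e n + et n - Rabs (x - c n)). split; [lra|].
    intros z Hz. split; [exact Hne|].
    pose proof (Rabs_triang (z - x) (x - c n)).
    replace (z - x + (x - c n)) with (z - c n) in * by ring. lra.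
  - intros t Ht. destruct (Hcov t Ht) as [i Hi]. exists i. split; [eauto|].
    assert (W i (c i)) by (apply epsilon_spec; eauto).
    pose proof (Hdiam i t (c i) Hi H). pose proof (Het i). lra.
  - destruct N as [|m]; [destruct (HN a ltac:(lra)) as [n [Hn _]]; lia|].
    assert (Hlen : b - a <= sum_f_R0 (fun n => 2 * (e n + et n)) m).
    { apply (interval_le_sum_diameters a b c); [exact Hab|intros n; pose proof (He n);
        pose proof (Het n); lra|].
      intros x Hx. destruct (HN x Hx) as [n [Hn [_ Hxn]]]. exists n. split; [lia|lra]. }
    replace (sum_f_R0 (fun i => 2 * (e i + et i)) m)
      with (2 * sum_f_R0 e m + 2 * sum_f_R0 et m) in Hlen
      by (rewrite (scal_sum e m 2), (scal_sum et m 2), <- sum_plus; apply sum_eq; intros; ring).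
    pose proof (sum_incr e m Sg HS He).
    pose proof (sum_incr et m (eta / (1 - /2))
      (infinite_sum_geometric eta (/2) ltac:(rewrite Rabs_right; lra)) (fun i => Rlt_le _ _ (Het i))).
    unfold eta in *. lra.
Qed.

Lemma Rpower_le_base_le1 x a b : 0 < x <= 1 -> a <= b -> Rpower x b <= Rpower x a.
Proof.
  intros Hx Hab. unfold Rpower.
  assert (ln x <= 0).
  { destruct (Req_dec x 1) as [->|Hne]; [rewrite ln_1; lra|].
    rewrite <- ln_1. left. apply ln_increasing; lra. }
  destruct (Req_dec (b * ln x) (a * ln x)) as [E|E]; [rewrite E; lra|].
  left. apply exp_increasing. nra.
Qed.

Lemma Rpower_lt_base_lt1 x a b : 0 < x < 1 -> a < b -> Rpower x b < Rpower x a.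
Proof.
  intros Hx Hab. unfold Rpower. apply exp_increasing.
  assert (ln x < 0) by (rewrite <- ln_1; apply ln_increasing; lra).
  nra.
Qed.

Section SupportedByN.
Variable p : nat -> R.
Hypothesis hp : supported_by_N p.

Lemma supported_by_N_bounds i : (1 <= i)%nat -> 0 < p i < 1.
Proof. apply hp. Qed.

Lemma phat_cv_1 : Un_cv (fun n => phat p (S (S n))) 1.
Proof. apply (Un_cv_ext (fun n => sum_f_R0 (fun k => p (S k)) n)); [apply phat_sum|apply hp]. Qed.

Lemma phat_lt_1 M : phat p (S M) < 1.
Proof.
  destruct M as [|n]; [simpl; lra|].
  pose proof (sum_incr (fun k => p (S k)) (S n) 1 (proj2 hp)
    (fun k => Rlt_le _ _ (proj1 (supported_by_N_bounds (S k) ltac:(lia))))) as H.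
  rewrite phat_sum, (phat_S p (S (S n))) in H by lia.
  pose proof (supported_by_N_bounds (S (S n)) ltac:(lia)). lra.
Qed.

Lemma pi_image_bounded_range y : pi_image_bounded p y -> 0 <= y < 1.
Proof.
  intros [w [[Hw1 [M HM]] Hpi]].
  assert (Hw : digits_le M w) by (intros j; split; [apply Hw1|apply HM]).
  assert (hM : forall i, (1 <= i <= M)%nat -> 0 < p i < 1)
    by (intros i Hi; apply supported_by_N_bounds; lia).
  pose proof (phat_lt_1 M).
  rewrite (UL_sequence _ _ _ Hpi (pi_lim_spec p M hM ltac:(lra) w Hw)).
  pose proof (pi_lim_bounds p M hM ltac:(lra) w Hw). lra.
Qed.

(* The weights [p i ^ s] gain at least [p 1 ^ s - p 1 > 0] of mass over [p]. *)
Lemma tilted_distribution s : 0 <= s < 1 ->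
  exists M q, (forall i, (1 <= i <= M)%nat -> 0 < q i < 1) /\ phat q (S M) = 1 /\
              (forall i, (1 <= i <= M)%nat -> q i <= Rpower (p i) s).
Proof.
  intros Hs. set (pw := fun i => Rpower (p i) s).
  assert (Hpw : forall i, (1 <= i)%nat -> p i <= pw i <= 1).
  { intros i Hi. pose proof (supported_by_N_bounds i Hi). unfold pw.
    rewrite <- (Rpower_1 (p i)) at 1 by lra. rewrite <- (Rpower_O (p i)) at 2 by lra.
    split; apply Rpower_le_base_le1; lra. }
  set (dl := pw 1%nat - p 1%nat).
  assert (Hdl : 0 < dl).
  { unfold dl, pw. rewrite <- (Rpower_1 (p 1%nat)) at 2 by apply hp, le_n.
    pose proof (Rpower_lt_base_lt1 (p 1%nat) s 1 (supported_by_N_bounds 1 (le_n 1)) ltac:(lra)). lra. }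
  assert (Hgain : forall n, phat p (S (S n)) + dl <= phat pw (S (S n))).
  { induction n as [|n IH]; [simpl; unfold dl; lra|].
    rewrite (phat_S p (S (S n))), (phat_S pw (S (S n))) by lia.
    pose proof (Hpw (S (S n)) ltac:(lia)). lra. }
  destruct (phat_cv_1 dl Hdl) as [N HN].
  specialize (HN N (le_n N)). unfold Rdist in HN. apply Rabs_def2 in HN.
  set (Sm := phat pw (S (S N))).
  assert (HSm : 1 < Sm) by (pose proof (Hgain N); unfold Sm; lra).
  exists (S N), (fun i => pw i / Sm). split; [|split].
  - intros i Hi. pose proof (Hpw i ltac:(lia)). pose proof (supported_by_N_bounds i ltac:(lia)).
    split; [apply Rdiv_lt_0_compat; lra|].
    apply (Rmult_lt_reg_r Sm); [lra|]. unfold Rdiv. rewrite Rmult_assoc, Rinv_l by lra. lra.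
  - rewrite phat_div. fold Sm. field. lra.
  - intros i Hi. pose proof (Hpw i ltac:(lia)). pose proof (supported_by_N_bounds i ltac:(lia)).
    apply (Rmult_le_reg_r Sm); [lra|]. unfold Rdiv. rewrite Rmult_assoc, Rinv_l by lra.
    fold (pw i). nra.
Qed.

End SupportedByN.

Lemma hausdorff_null_subset s (E F : R -> Prop) :
  (forall x, E x -> F x) -> hausdorff_null s F -> hausdorff_null s E.
Proof.
  intros HEF HF delta eps Hd He.
  destruct (HF delta eps Hd He) as [U [d [l [Hcov H]]]].
  exists U, d, l. split; [intros x Hx; apply Hcov, HEF, Hx|exact H].
Qed.

Lemma pow_bracket r n y : 0 < r < 1 -> r ^ S n <= y <= 1 ->
  exists i, r ^ S i <= y <= r ^ i.
Proof.
  intros Hr. revert y. induction n as [|n IH]; intros y Hy; [exists O; simpl in *; lra|].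
  destruct (Rle_lt_dec y (r ^ S n)) as [H|H]; [exists (S n); lra|apply IH; lra].
Qed.

Lemma unit_interval_geometric_cover r x : 0 < r < 1 -> 0 <= x < 1 ->
  exists i, 1 - r ^ i <= x <= 1 - r ^ S i.
Proof.
  intros Hr Hx.
  destruct (pow_lt_1_zero r ltac:(rewrite Rabs_right; lra) (1 - x) ltac:(lra)) as [N HN].
  specialize (HN (S N) ltac:(lia)). rewrite Rabs_right in HN by (apply Rle_ge, pow_le; lra).
  destruct (pow_bracket r N (1 - x) Hr ltac:(lra)) as [i Hi]. exists i. lra.
Qed.

Lemma infinite_sum_Rpower_geometric c r s : 0 < c -> 0 < r < 1 -> 0 < s ->
  infinite_sum (fun i => Rpower (c * r ^ i) s) (Rpower c s / (1 - Rpower r s)).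
Proof.
  intros Hc Hr Hs.
  apply (Un_cv_ext (fun n => sum_f_R0 (fun i => Rpower c s * Rpower r s ^ i) n)).
  - intros n. apply sum_eq. intros i _.
    rewrite <- Rpower_mult_distr, <- (Rpower_pow i r), Rpower_mult, (Rmult_comm (INR i)),
      <- Rpower_mult, Rpower_pow by (try apply pow_lt; try apply Rpower_pos; lra).
    reflexivity.
  - apply infinite_sum_geometric. pose proof (Rpower_pos r s).
    pose proof (Rpower_lt_base_lt1 r 0 s Hr Hs). rewrite Rpower_O in * by lra.
    rewrite Rabs_right; lra.
Qed.

(* The intervals [[1 - r^i, 1 - r^(i+1)]], of lengths [c r^i] with [c = 1 - r] small,
   have [sum (c r^i)^s = c^s / (1 - r^s) <= c^(s-1)] as [1 - r^s >= 1 - r = c]. *)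
Lemma hausdorff_null_unit_interval s : 1 < s -> hausdorff_null s (fun x => 0 <= x < 1).
Proof.
  intros Hs delta eps Hd He.
  set (c := Rmin (Rmin delta (1/2)) (Rpower (eps/2) (/(s-1)))).
  assert (Hc0 : 0 < c) by (unfold c; repeat apply Rmin_glb_lt; try lra; apply Rpower_pos).
  assert (Hcd : c <= delta) by (unfold c; eapply Rle_trans; [apply Rmin_l|apply Rmin_l]).
  assert (Hc2 : c <= 1/2) by (unfold c; eapply Rle_trans; [apply Rmin_l|apply Rmin_r]).
  assert (Hceps : c <= Rpower (eps/2) (/(s-1))) by apply Rmin_r.
  set (r := 1 - c). assert (Hr : 0 < r < 1) by (unfold r; lra).
  assert (Hrs : Rpower r s <= r)
    by (rewrite <- (Rpower_1 r) at 2 by lra; apply Rpower_le_base_le1; lra).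
  pose proof (Rpower_pos r s).
  exists (fun i x => 1 - r ^ i <= x <= 1 - r ^ S i), (fun i => c * r ^ i),
    (Rpower c s / (1 - Rpower r s)).
  split; [|split; [|split; [|split]]].
  - intros x Hx. apply unit_interval_geometric_cover; [exact Hr|exact Hx].
  - intros i. pose proof (pow_lt r i ltac:(lra)). pose proof (pow_incr r 1 i ltac:(lra)) as H1. rewrite pow1 in H1.
    split; [apply Rmult_lt_0_compat; lra|nra].
  - intros i x y Hx Hy. apply Rabs_le. unfold r in *. simpl in *. nra.
  - apply infinite_sum_Rpower_geometric; lra.
  - assert (Hsplit : Rpower c s = Rpower c (s - 1) * c).
    { rewrite <- (Rpower_1 c) at 3 by lra. rewrite <- Rpower_plus. f_equal; ring. }
    assert (Hsmall : Rpower c (s - 1) <= eps / 2).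
    { eapply Rle_trans; [apply Rle_Rpower_l; [lra|split; [exact Hc0|exact Hceps]]|].
      rewrite Rpower_mult, Rinv_l, Rpower_1 by lra. lra. }
    pose proof (Rpower_pos c (s - 1)).
    apply (Rle_lt_trans _ (Rpower c (s - 1))); [|lra].
    apply (Rmult_le_reg_r (1 - Rpower r s)); [unfold r in *; lra|].
    unfold Rdiv. rewrite Rmult_assoc, Rinv_l, Hsplit by (unfold r in *; lra).
    unfold r in *. nra.
Qed.

(* Pulling a small cover of [E] back along [g] and pushing it forward along [h] would give a
   cover of [[0, 1/2]] of total diameter less than [1/4]. *)
Lemma not_hausdorff_null_holder_onto (X : Type) (g h : X -> R) (E : R -> Prop) s K :
  0 <= s -> 0 < K -> (forall x, E (g x)) ->
  (forall x y, h x = h y \/ (g x <> g y /\ Rabs (h x - h y) <= K * Rpower (Rabs (g x - g y)) s)) ->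
  (forall t, 0 <= t < 1 -> exists x, h x = t) ->
  ~ hausdorff_null s E.
Proof.
  intros Hs HK HE Hholder Honto Hnull.
  destruct (Hnull 1 (/ (4 * K)) ltac:(lra) ltac:(apply Rinv_0_lt_compat; lra))
    as [U [d [l [Hcov [Hd [Hdiam [Hsum Hl]]]]]]].
  assert (Hcover : 1/2 - 0 <= 2 * (K * l)).
  { apply (interval_le_cover_diameters (fun i t => exists x, h x = t /\ U i (g x))
             (fun i => K * Rpower (d i) s)); [lra| | |apply infinite_sum_scal, Hsum|].
    - intros i. pose proof (Rpower_pos (d i) s). nra.
    - intros i t t' [x [<- Hx]] [y [<- Hy]].
      destruct (Hholder x y) as [->|[Hne Hb]].
      + rewrite Rminus_diag, Rabs_R0. pose proof (Rpower_pos (d i) s). nra.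
      + eapply Rle_trans; [exact Hb|]. apply Rmult_le_compat_l; [lra|].
        apply Rle_Rpower_l; [lra|]. split; [apply Rabs_pos_lt; lra|apply (Hdiam i); auto].
    - intros t Ht. destruct (Honto t ltac:(lra)) as [x <-].
      destruct (Hcov (g x) (HE x)) as [i Hi]. eauto. }
  apply (Rmult_lt_compat_l (4 * K)) in Hl; [|lra]. rewrite Rinv_r in Hl by lra.
  lra.
Qed.

Lemma pi_image_bounded_not_null p s : supported_by_N p -> 0 <= s < 1 ->
  ~ hausdorff_null s (pi_image_bounded p).
Proof.
  intros hp Hs.
  destruct (tilted_distribution p hp s Hs) as [M [q [Hq [HPq Hqp]]]].
  assert (HpM : forall i, (1 <= i <= M)%nat -> 0 < p i < 1)
    by (intros i Hi; apply (supported_by_N_bounds p hp); lia).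
  pose proof (phat_lt_1 p hp M) as HPp.
  destruct (finite_min_pos p M (fun i Hi => proj1 (HpM i Hi))) as [pmin [Hpmin Hpmin_le]].
  apply (not_hausdorff_null_holder_onto {w | digits_le M w}
           (fun w => pi_lim p (proj1_sig w)) (fun w => pi_lim q (proj1_sig w))
           _ s (holder_const p M s pmin)); [lra|apply holder_const_pos| | |].
  - intros [w Hw]. exists w. split; [split; [intros j; apply Hw|exists M; intros j; apply Hw]|].
    apply (pi_lim_spec p M HpM ltac:(lra) w Hw).
  - intros [x Hx] [y Hy]. simpl.
    destruct (pi_lim_holder p q M HpM Hq HPp ltac:(lra) s ltac:(lra) Hqp pmin Hpmin Hpmin_le
                x y Hx Hy) as [<-|H]; [left|right]; auto.
  - intros t Ht. exists (exist _ (greedy_digits q M t) (greedy_digits_le q M Hq HPq t Ht)). simpl.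
    apply (pi_lim_greedy_digits q M Hq HPq t Ht).
Qed.

Lemma hausdorff_dim_is_threshold (E : R -> Prop) d : 0 <= d ->
  (forall s, d < s -> hausdorff_null s E) ->
  (forall s, 0 <= s < d -> ~ hausdorff_null s E) ->
  hausdorff_dim_is E d.
Proof.
  intros Hd Hnull Hnot. split.
  - intros s [Hs Hn]. destruct (Rlt_le_dec s d) as [H|H]; [|exact H].
    exfalso. exact (Hnot s ltac:(lra) Hn).
  - intros b Hb. destruct (Rle_lt_dec b d) as [H|H]; [exact H|].
    assert (b <= (b + d) / 2); [|lra].
    apply Hb. split; [lra|]. apply Hnull. lra.
Qed.

Theorem corollary1 (p : nat -> R) (hp : supported_by_N p) :
  hausdorff_dim_is (pi_image_bounded p) 1.
Proof.
  apply hausdorff_dim_is_threshold; [lra| |].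
  - intros s Hs. apply (hausdorff_null_subset s _ (fun x => 0 <= x < 1)).
    + apply (pi_image_bounded_range p hp).
    + apply hausdorff_null_unit_interval, Hs.
  - intros s Hs. apply pi_image_bounded_not_null; assumption.
Qed.
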